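(* Let $1<p<\infty$, let $\Omega\subset\mathbb{R}^d$ be a bounded open set with $C^{1,\beta}$ boundary, let $\gamma$ be a conductivity on $\overline\Omega$ bounded from above and below by positive constants, and let the boundary voltage $v\in C^{1,\beta}$ be given; let $u$ solve $\operatorname{div}(\gamma|\nabla u|^{p-2}\nabla u)=0$ in $\Omega$, $u=v$ on $\partial\Omega$, and assume $u$ is continuously differentiable up to the boundary so that the strong Dirichlet-to-Neumann map $\Lambda^s_\gamma(v)(x_0)=\gamma(x_0)|\nabla u(x_0)|^{p-2}\nabla u(x_0)\cdot\nu(x_0)$ is defined at the points $x_0\in\partial\Omega$. Then for every $x_0\in\partial\Omega$ the equation \[(|\nabla_T u(x_0)|^2+t^2)^{\frac{p-2}{2}}\,t=\frac{1}{\gamma(x_0)}|\Lambda^s_\gamma(v)(x_0)|\] has a unique solution $t\in[0,\infty)$, and $\partial_\nu u(x_0)=t\,\operatorname{sign}(\Lambda^s_\gamma(v)(x_0))$. In particular $\partial_\nu u(x_0)$ is computable from $\nabla_T u(x_0)$ (which is determined by $v$), $\gamma(x_0)$ and $\Lambda^s_\gamma(v)(x_0)$.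
   Context: $\nu$ is the outer unit normal, $\partial_\nu u=\nu\cdot\nabla u$, and $\nabla_T u(x_0)$ is the orthogonal projection of $\nabla u(x_0)$ onto the tangent space of $\partial\Omega$ at $x_0$ (it coincides with the tangential gradient of $v$). The left-hand side of the equation, as a function of $t$, is interpreted by continuity at $t=0$ (value $0$). *)

From HB Require Import structures.
From mathcomp Require Import all_boot all_order all_algebra.
From mathcomp Require Import all_classical all_reals all_analysis.
Set Implicit Arguments. Unset Strict Implicit. Unset Printing Implicit Defensive.
Import Order.TTheory GRing.Theory Num.Theory.
Import numFieldNormedType.Exports.
Local Open Scope ring_scope.

Definition dotv {R : realType} {d : nat} (a b : 'rV[R]_d) : R :=
  \sum_(i < d) a 0 i * b 0 i.
Definition enorm {R : realType} {d : nat} (a : 'rV[R]_d) : R :=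
  Num.sqrt (dotv a a).

Definition grad {R : realType} {d : nat} (u : 'rV[R]_d -> R) (x : 'rV[R]_d)
  : 'rV[R]_d := \row_(i < d) derive u x (delta_mx 0 i).

(* orthogonal projection of w onto the tangent space {nu}^perp (nu unit) *)
Definition tang_proj {R : realType} {d : nat} (nu w : 'rV[R]_d) : 'rV[R]_d :=
  w - dotv w nu *: nu.

Definition DtN_strong {R : realType} {d : nat} (p : R) (gamma : 'rV[R]_d -> R)
  (u : 'rV[R]_d -> R) (nu : 'rV[R]_d) (x0 : 'rV[R]_d) : R :=
  gamma x0 * (enorm (grad u x0)) `^ (p - 2) * dotv (grad u x0) nu.

(** Write [g] for the gradient, [a = g . nu] for its normal component and
    [b = |g_T|^2 = |g|^2 - a^2].  Since [|g|^(p-2) = (b + |a|^2)^((p-2)/2)],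
    the Dirichlet-to-Neumann value gives [|L| / gamma(x0) = F |a|] with
    [F t = (b + t^2)^((p-2)/2) t].  The exponent [1 + (p-2) = p - 1] is
    positive, which makes [F] strictly increasing on [[0, oo)]; hence [|a|] is
    the only nonnegative solution, and [a = |a| sg a = |a| sg L]. *)
From HB Require Import structures.
From mathcomp Require Import all_boot all_order all_algebra.
From mathcomp Require Import all_classical all_reals all_analysis.
From mathcomp Require Import ring lra.
Import Order.TTheory GRing.Theory Num.Theory.
Import numFieldNormedType.Exports.
Local Open Scope classical_set_scope.
Local Open Scope ring_scope.

Section PowRSqrD.
Variable R : realType.

Lemma le0_ger_powR {q : R} : q <= 0 ->
  {in Num.pos &, {homo (@powR R)^~ q : x y / x <= y >-> y <= x}}.
Proof.
move=> q0 x y x0 y0 xy.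
have := @ge0_ler_powR R (- q) _ x y; rewrite !powRN lef_pV2 ?posrE ?powR_gt0 //.
by apply; rewrite ?oppr_ge0 // nnegrE ltW // -posrE.
Qed.

Lemma powR_sqrD_mulr_ltr (b q : R) : 0 <= b -> 0 < 1 + 2 * q ->
  {in Num.nneg &, {homo (fun t => (b + t ^+ 2) `^ q * t) : s t / s < t}}.
Proof.
rewrite /= => b0 q1 s t; rewrite !nnegrE => s0 _ st.
have t0 : 0 < t by apply: le_lt_trans st.
have Bt : 0 < b + t ^+ 2 by rewrite ltr_wpDl // exprn_gt0.
have [->|sn0] := eqVneq s 0; first by rewrite mulr0 mulr_gt0 // powR_gt0.
have {s0 sn0} s0 : 0 < s by rewrite lt_def sn0.
have Bs : 0 < b + s ^+ 2 by rewrite ltr_wpDl // exprn_gt0.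
have [q0|q0] := leP 0 q.
  apply: (@lt_le_trans _ _ ((b + s ^+ 2) `^ q * t)).
    by rewrite ltr_pM2l // powR_gt0.
  apply: ler_wpM2r; first exact: ltW.
  apply: (ge0_ler_powR q0); rewrite ?nnegrE ?ltW //.
  by rewrite ltrD2l ltr_pXn2r ?nnegrE ?ltW.
pose k := t / s.
have k1 : 1 < k by rewrite ltr_pdivlMr // mul1r.
have k0 : 0 < k by apply: lt_trans k1.
have tE : t = k * s by rewrite divfK ?gt_eqF.
have Bk : b + t ^+ 2 <= k ^+ 2 * (b + s ^+ 2).
  rewrite tE exprMn mulrDr lerD2r ler_peMl //.
  by rewrite exprn_ege1 // ltW.
have powBk : k `^ (2 * q) * (b + s ^+ 2) `^ q <= (b + t ^+ 2) `^ q.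
  rewrite powRrM powR_mulrn ?(ltW k0) // -powRM ?exprn_ge0 ?(ltW k0) ?(ltW Bs) //.
  by apply: (le0_ger_powR (ltW q0) _ _ _ _ Bk); rewrite posrE // mulr_gt0 ?exprn_gt0.
have k_gt1 : 1 < k `^ (1 + 2 * q).
  by have := gt0_ltr_powR q1 _ _ k1; rewrite powR1; apply; rewrite nnegrE ?ltW.
have kE : k `^ (1 + 2 * q) = k * k `^ (2 * q).
  by rewrite powRD ?powRr1 ?ltW // gt_eqF ?orbT ?implybT.
apply: (@lt_le_trans _ _ (k `^ (2 * q) * (b + s ^+ 2) `^ q * t)).
  rewrite tE; have -> : k `^ (2 * q) * (b + s ^+ 2) `^ q * (k * s)
    = (b + s ^+ 2) `^ q * s * k `^ (1 + 2 * q) by rewrite kE; ring.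
  by rewrite ltr_pMr // mulr_gt0 // powR_gt0.
by rewrite ler_pM2r.
Qed.

Lemma powR_sqrD_mulr_inj (b q : R) : 0 <= b -> 0 < 1 + 2 * q ->
  {in Num.nneg &, injective (fun t => (b + t ^+ 2) `^ q * t)}.
Proof. by move=> b0 q1; apply/inc_inj_in/le_mono_in/powR_sqrD_mulr_ltr. Qed.

End PowRSqrD.

Section EuclideanRow.
Variables (R : realType) (d : nat).
Implicit Types (v w z : 'rV[R]_d) (c : R).

Lemma dotvC v w : dotv v w = dotv w v.
Proof. by apply: eq_bigr => i _; rewrite mulrC. Qed.

Lemma dotvBZl v w z c : dotv (v - c *: w) z = dotv v z - c * dotv w z.
Proof.
rewrite /dotv mulr_sumr -sumrB; apply: eq_bigr => i _.
by rewrite !mxE; ring.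
Qed.

Lemma dotvv_ge0 v : 0 <= dotv v v.
Proof. by apply: sumr_ge0 => i _; rewrite -expr2 sqr_ge0. Qed.

Lemma enorm_sqr v : enorm v ^+ 2 = dotv v v.
Proof. by rewrite sqr_sqrtr ?dotvv_ge0. Qed.

Lemma enorm_powR v r : enorm v `^ r = dotv v v `^ (r / 2).
Proof. by rewrite /enorm -powR12_sqrt ?dotvv_ge0 // -powRrM mulrC. Qed.

Lemma enorm_tang_proj_sqr nu w : enorm nu = 1 ->
  enorm (tang_proj nu w) ^+ 2 = dotv w w - dotv w nu ^+ 2.
Proof.
move=> nu1; have nunu : dotv nu nu = 1 by rewrite -enorm_sqr nu1 expr1n.
rewrite enorm_sqr /tang_proj dotvBZl (dotvC w) (dotvC nu) !dotvBZl nunu.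
by rewrite (dotvC nu w); ring.
Qed.

End EuclideanRow.

Section DtN.
Variables (R : realType) (d : nat) (p : R) (gamma : 'rV[R]_d -> R).
Variables (u : 'rV[R]_d -> R) (nu x0 : 'rV[R]_d).
Let g := grad u x0.

Lemma normr_DtN_strong : 0 < gamma x0 ->
  `|DtN_strong p gamma u nu x0| / gamma x0
    = dotv g g `^ ((p - 2) / 2) * `|dotv g nu|.
Proof.
move=> gamma0; rewrite /DtN_strong enorm_powR !normrM gtr0_norm //.
by rewrite ger0_norm ?powR_ge0 //; field; rewrite gt_eqF.
Qed.

Lemma sgr_DtN_strong : 0 < gamma x0 -> enorm nu = 1 ->
  Num.sg (DtN_strong p gamma u nu x0) = Num.sg (dotv g nu).
Proof.
move=> gamma0 nu1; rewrite /DtN_strong !sgrM gtr0_sg // mul1r.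
have [->|a0] := eqVneq (dotv g nu) 0; first by rewrite sgr0 mulr0.
rewrite enorm_powR gtr0_sg ?mul1r // powR_gt0 //.
rewrite -(subrK (dotv g nu ^+ 2) (dotv g g)) -enorm_tang_proj_sqr //.
by rewrite ltr_wpDl ?sqr_ge0 // lt_def sqrf_eq0 a0 sqr_ge0.
Qed.

End DtN.

Theorem lemma4p2 (R : realType) (d : nat) (p : R) (Omega : set 'rV[R]_d)
  (gamma : 'rV[R]_d -> R) (c1 c2 : R) (u : 'rV[R]_d -> R)
  (x0 nu : 'rV[R]_d) :
  1 < p ->
  open Omega -> bounded_set Omega ->
  0 < c1 -> (forall x, closure Omega x -> c1 <= gamma x <= c2) ->
  closure Omega x0 -> ~ Omega x0 ->
  enorm nu = 1 ->
  differentiable u x0 ->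
  let gT := tang_proj nu (grad u x0) in
  let L := DtN_strong p gamma u nu x0 in
  let E := fun t : R =>
    (enorm gT ^+ 2 + t ^+ 2) `^ ((p - 2) / 2) * t = `|L| / gamma x0 in
  (exists! t : R, 0 <= t /\ E t) /\
  (forall t : R, 0 <= t -> E t -> dotv (grad u x0) nu = t * Num.sg L).
Proof.
move=> p1 _ _ c1_gt0 gamma_bounds x0_closure _ nu1 _ gT L E.
have gamma0 : 0 < gamma x0.
  by have /andP[+ _] := gamma_bounds x0 x0_closure; exact: lt_le_trans.
set a := dotv (grad u x0) nu.
pose F t := (enorm gT ^+ 2 + t ^+ 2) `^ ((p - 2) / 2) * t.
have LF : `|L| / gamma x0 = F `|a|.
  rewrite normr_DtN_strong // /F enorm_tang_proj_sqr // real_normK ?num_real //.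
  by rewrite subrK.
have E_uniq t : 0 <= t -> E t -> t = `|a|.
  rewrite /E LF => t0; apply: powR_sqrD_mulr_inj; rewrite ?nnegrE ?sqr_ge0 //.
  lra.
split.
  exists `|a|; split; first by split; rewrite // /E LF.
  by move=> t [t0 /(E_uniq t t0)].
move=> t t0 /(E_uniq t t0) ->.
by rewrite /L sgr_DtN_strong // mulrC mulr_sg_norm.
Qed.
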